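(* For every $1\le k\le e-1$, the interval $[1,\lambda^k]$ equals $D_k$, and $\lambda^k$ is balanced, i.e. $[1,\lambda^k]=[1,\lambda^k]_r$.
   Context: Let $e\ge 2$, $n\ge 2$, $\zeta_e=e^{2\pi i/e}$. $G(e,e,n)$ is the group of $n\times n$ monomial matrices with nonzero entries $e$-th roots of unity whose product is $1$; $w[i,c]$ is the $(i,c)$ entry. For $i\in\mathbb{Z}/e\mathbb{Z}$, $t_i$ is the matrix with $(1,2)$ entry $\zeta_e^{-i}$, $(2,1)$ entry $\zeta_e^{i}$, $(j,j)$ entry $1$ for $3\le j\le n$, other entries $0$; for $3\le j\le n$, $s_j$ is the permutation matrix of the transposition $(j-1\ j)$. $X=\{t_0,\dots,t_{e-1},s_3,\dots,s_n\}$ and $\ell$ is the word length with respect to $X$. For $u,w\in G(e,e,n)$ write $u\preceq w$ if $\ell(u)+\ell(u^{-1}w)=\ell(w)$, and $u\preceq_r w$ if $\ell(wu^{-1})+\ell(u)=\ell(w)$. For $g\in G(e,e,n)$, $[1,g]=\{w: w\preceq g\}$ and $[1,g]_r=\{w: w\preceq_r g\}$; $g$ is balanced if $[1,g]=[1,g]_r$. Let $\lambda$ be the diagonal matrix $\mathrm{diag}(\zeta_e^{-(n-1)},\zeta_e,\dots,\zeta_e)\in G(e,e,n)$. For $w\in G(e,e,n)$, a nonzero entry $w[i,c]$ is called a bullet if there is no nonzero entry $w[i',c']$ with $i'<i$ and $c'<c$. For $1\le k\le e-1$, $D_k$ is the set of $w\in G(e,e,n)$ such that every nonzero entry of $w$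 that is not a bullet is equal to $1$ or to $\zeta_e^{k}$. *)

From HB Require Import structures.
From mathcomp Require Import all_boot all_order all_algebra all_fingroup.
Set Implicit Arguments. Unset Strict Implicit. Unset Printing Implicit Defensive.
Import GRing.Theory.
Local Open Scope ring_scope.

(* Encoding of the monomial matrices of size n with nonzero entries e-th roots
   of unity: a pair (sigma, a) stands for the matrix w with
   w[i, sigma i] = zeta_e ^ (a i) and all other entries 0.
   Rows/columns are 0-based ordinals 'I_n (row i here = row i+1 of the paper). *)
Definition mon (e n : nat) := ({perm 'I_n} * {ffun 'I_n -> 'Z_e})%type.

(* entry w i c : None for a zero entry, Some a for the entry zeta_e ^ a *)
Definition entry (e n : nat) (w : mon e n) (i c : 'I_n) : option 'Z_e :=
  if w.1 i == c then Some (w.2 i) else None.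

(* matrix product: (uv)[i,c] = u[i, su i] v[su i, c] *)
Definition mmul (e n : nat) (u v : mon e n) : mon e n :=
  ((u.1 * v.1)%g, [ffun i => u.2 i + v.2 (u.1 i)]).

Definition mone (e n : nat) : mon e n := (1%g, [ffun => 0]).

Definition minv (e n : nat) (u : mon e n) : mon e n :=
  ((u.1^-1)%g, [ffun j => - u.2 ((u.1^-1)%g j)]).

(* membership in G(e,e,n): product of the nonzero entries equals 1 *)
Definition inG (e n : nat) (w : mon e n) : bool := \sum_i w.2 i == 0.

(* transposition of the (1-based) positions a and b *)
Definition tp (n a b : nat) : {perm 'I_n} :=
  match insub a.-1, insub b.-1 with
  | Some x, Some y => tperm x y
  | _, _ => 1%g
  end.

(* t_i : (1,2) entry zeta^{-i}, (2,1) entry zeta^i, (j,j) entry 1 for j >= 3 *)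
Definition tgen (e n : nat) (i : 'Z_e) : mon e n :=
  (tp n 1 2, [ffun r : 'I_n => if val r == 0%N then - i
                               else if val r == 1%N then i else 0]).

Definition sgen (e n : nat) (j : nat) : mon e n := (tp n j.-1 j, [ffun => 0]).

Definition isgen (e n : nat) (x : mon e n) : bool :=
  [exists i : 'Z_e, x == tgen n i] ||
  [exists j : 'I_n.+1, (3 <= j)%N && (x == sgen e n j)].

Definition wprod (e n : nat) (s : seq (mon e n)) : mon e n :=
  foldr (@mmul e n) (mone e n) s.

Definition wlen (e n : nat) (w : mon e n) (m : nat) : Prop :=
  (exists s : seq (mon e n), all (@isgen e n) s /\ wprod s = w /\ size s = m) /\
  (forall s : seq (mon e n), all (@isgen e n) s -> wprod s = w -> (m <= size s)%N).

Definition preceq (e n : nat) (u w : mon e n) : Prop :=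
  exists a b c, wlen u a /\ wlen (mmul (minv u) w) b /\ wlen w c /\ (a + b = c)%N.

Definition preceq_r (e n : nat) (u w : mon e n) : Prop :=
  exists a b c, wlen (mmul w (minv u)) a /\ wlen u b /\ wlen w c /\ (a + b = c)%N.

(* lambda = diag(zeta^{-(n-1)}, zeta, ..., zeta) *)
Definition lambda (e n : nat) : mon e n :=
  (1%g, [ffun r : 'I_n => if val r == 0%N then - ((n - 1)%:R) else 1]).

Definition mpow (e n : nat) (w : mon e n) (k : nat) : mon e n :=
  iter k (mmul w) (mone e n).

Definition bullet (e n : nat) (w : mon e n) (i c : 'I_n) : bool :=
  (entry w i c != None) &&
  [forall i' : 'I_n, forall c' : 'I_n,
     ~~ [&& (i' < i)%N, (c' < c)%N & entry w i' c' != None]].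

Definition inD (e n k : nat) (w : mon e n) : bool :=
  inG w &&
  [forall i : 'I_n, forall c : 'I_n,
     ((entry w i c != None) && ~~ bullet w i c) ==>
     ((entry w i c == Some 0) || (entry w i c == Some (k%:R)))].

From mathcomp Require Import all_boot all_order all_algebra all_fingroup.
From mathcomp Require Import zify.
Set Implicit Arguments. Unset Strict Implicit. Unset Printing Implicit Defensive.

Import GRing.Theory.

(* For a monomial matrix with permutation s and exponents a, the word length is the sum
   over pairs of rows j < i of  [s i < s j]  if a i = 0  and of  1 + [s j < s i]
   otherwise.  This count changes by at most one under left multiplication by a
   generator, and every w <> 1 is shortened by some generator, so it is the word length.
   All rows i >= 1 of lambda^k carry the exponent k <> 0, hence l(lambda^k) = n(n-1).
   The rows of w outside the first row and column reappear in w^-1 lambda^k and in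
   lambda^k w^-1 with exponent k - a i, and comparing pairs of rows gives
     l(w) + l(w^-1 lambda^k) = l(lambda^k) + 2N = l(lambda^k w^-1) + l(w),
   where N counts the pairs j < i with s j < s i and a i not in {0, k}.  Such a pair
   witnesses a non-bullet entry with exponent outside {0, k}, so w <= lambda^k,
   w <=_r lambda^k and w in D_k are all equivalent to N = 0. *)

Lemma Zp_nat_neq0 p m : 1 < p -> 0 < m < p -> (m%:R != 0 :> 'Z_p)%R.
Proof.
by move=> p_gt1 /andP [m_gt0 m_lt]; rewrite -val_eqE /= val_Zp_nat // modn_small // -lt0n.
Qed.

Lemma sum_pair_indicator (I : finType) (F : I -> I -> nat) (r s : I) :
  \sum_i \sum_j ((j == r) && (i == s)) * F j i = F r s.
Proof.
rewrite (bigD1 s) //= [X in _ + X]big1 => [|i /negPf ->]; last first.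
  by rewrite big1 // => j _; rewrite andbF.
by rewrite addn0 (bigD1 r) //= !eqxx mul1n big1 ?addn0 // => j /negPf ->.
Qed.

Lemma double_sum_eq_sym (I : finType) (f g : I -> I -> nat) :
  (forall i j, f j i + f i j = g j i + g i j) ->
  \sum_i \sum_j f j i = \sum_i \sum_j g j i.
Proof.
move=> fg.
have twice h : \sum_i \sum_j h j i + \sum_i \sum_j h j i =
               \sum_(i : I) \sum_(j : I) (h j i + h i j).
  by rewrite {2}exchange_big -big_split; apply: eq_bigr => i _; rewrite -big_split.
have := twice f; have := twice g.
under [in X in _ = X -> _]eq_bigr => i _ do under eq_bigr => j _ do rewrite -fg.
lia.
Qed.

Lemma tperm_adjacent_ltn n (p q j i : 'I_n) : q = p.+1 :> nat ->
  (tperm p q j < tperm p q i) + ((j == p) && (i == q)) =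
  (j < i) + ((j == q) && (i == p)).
Proof.
move=> pq.
case: tpermP => [->|->|/eqP jp /eqP jq]; case: tpermP => [->|->|/eqP ip /eqP iq];
  try move: jp; try move: jq; try move: ip; try move: iq;
  by rewrite -!val_eqE /= pq; lia.
Qed.

Lemma perm_incr_eq1 n (s : {perm 'I_n}) :
  (forall i j : 'I_n, j = i.+1 :> nat -> s i < s j) -> s = 1%g.
Proof.
move=> incr.
have up m (lt_mn : m < n) : m <= s (Ordinal lt_mn).
  elim: m lt_mn => [|m IH] lt_mn //.
  by have := IH (ltnW lt_mn); have := incr (Ordinal (ltnW lt_mn)) (Ordinal lt_mn) erefl; lia.
have down d m (lt_mn : m < n) : m + d = n.-1 -> s (Ordinal lt_mn) <= m.
  elim: d m lt_mn => [|d IH] m lt_mn hd; first by have := ltn_ord (s (Ordinal lt_mn)); lia.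
  have lt_m1n : m.+1 < n by lia.
  by have := IH m.+1 lt_m1n ltac:(lia); have := incr (Ordinal lt_mn) (Ordinal lt_m1n) erefl; lia.
apply/permP => -[m lt_mn]; apply: val_inj; rewrite perm1 /=.
by have := up m lt_mn; have := down (n.-1 - m) m lt_mn ltac:(lia); lia.
Qed.

Section Length.
Variables e n : nat.
Local Notation M := (mon e n).

Definition pair_weight (s : {perm 'I_n}) (a : {ffun 'I_n -> 'Z_e}) (j i : 'I_n) : nat :=
  if a i == 0%R then nat_of_bool (s i < s j) else (s j < s i).+1.

Definition mlength (x : M) : nat :=
  \sum_(i : 'I_n) \sum_(j : 'I_n) (j < i) * pair_weight x.1 x.2 j i.

Lemma mlength_tperm_adjacent (s : {perm 'I_n}) (a : {ffun 'I_n -> 'Z_e}) (p q : 'I_n) :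
  q = p.+1 :> nat ->
  mlength ((tperm p q * s)%g, [ffun r => a (tperm p q r)]) + pair_weight s a p q =
  mlength (s, a) + pair_weight s a q p.
Proof.
move=> pq; rewrite /mlength /= (reindex_inj (@perm_inj _ (tperm p q))) /=.
under eq_bigr => i _ do rewrite (reindex_inj (@perm_inj _ (tperm p q))) /=.
have weightE j i : pair_weight (tperm p q * s) [ffun r => a (tperm p q r)]
                     (tperm p q j) (tperm p q i) = pair_weight s a j i.
  by rewrite /pair_weight !ffunE !permM !tpermK.
under eq_bigr => i _ do under eq_bigr => j _ do rewrite weightE.
rewrite -(sum_pair_indicator (pair_weight s a) p q).
rewrite -(sum_pair_indicator (pair_weight s a) q p).
rewrite -!big_split; apply: eq_bigr => i _; rewrite -!big_split; apply: eq_bigr => j _.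
by rewrite /= -!mulnDl tperm_adjacent_ltn.
Qed.

Lemma mlength_change_rows01 (s : {perm 'I_n}) (a a' : {ffun 'I_n -> 'Z_e}) (r0 r1 : 'I_n) :
  r0 = 0 :> nat -> r1 = 1 :> nat -> (forall r : 'I_n, 1 < r -> a' r = a r) ->
  mlength (s, a') + pair_weight s a r0 r1 = mlength (s, a) + pair_weight s a' r0 r1.
Proof.
move=> r00 r11 aa'; rewrite /mlength /=.
rewrite -(sum_pair_indicator (pair_weight s a) r0 r1).
rewrite -(sum_pair_indicator (pair_weight s a') r0 r1).
rewrite -!big_split; apply: eq_bigr => i _; rewrite -!big_split; apply: eq_bigr => j _ /=.
case: (ltnP 1 i) => [i_gt1|i_le1]; first by rewrite /pair_weight aa' // addnC.
have -> : (j < i) = (j == r0) && (i == r1) by rewrite -!val_eqE /= r00 r11; lia.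
by rewrite addnC.
Qed.

Lemma pair_weight_swap_le (s : {perm 'I_n}) (a a' : {ffun 'I_n -> 'Z_e}) (j i : 'I_n) :
  j != i -> pair_weight s a' i j <= pair_weight s a j i + 1.
Proof.
move=> ji; have : s j != s i :> nat by rewrite val_eqE (inj_eq perm_inj).
by rewrite /pair_weight; case: (a' j == 0%R); case: (a i == 0%R); lia.
Qed.

Lemma tp_ord (a b : nat) (x y : 'I_n) : x = a.-1 :> nat -> y = b.-1 :> nat ->
  tp n a b = tperm x y.
Proof. by move=> xa yb; rewrite /tp -xa -yb !valK. Qed.

Lemma isgenE (g : M) :
  isgen g -> (exists b, g = tgen n b) \/ (exists2 j, 3 <= j <= n & g = sgen e n j).
Proof.
case/orP=> [/existsP [b /eqP ->]|/existsP [j /andP [j_ge3 /eqP ->]]]; first by left; exists b.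
by right; exists j; rewrite // j_ge3 -ltnS ltn_ord.
Qed.

Lemma isgen_tgen b : isgen (tgen n b : M).
Proof. by apply/orP; left; apply/existsP; exists b. Qed.

Lemma isgen_sgen j : 3 <= j <= n -> isgen (sgen e n j).
Proof.
case/andP=> j_ge3 j_le; apply/orP; right; apply/existsP.
by exists (Ordinal (j_le : j < n.+1)); rewrite /= j_ge3 eqxx.
Qed.

Lemma inG_mmul (u v : M) : inG u -> inG v -> inG (mmul u v).
Proof.
rewrite /inG /mmul /= => /eqP u0 /eqP v0.
under eq_bigr => i _ do rewrite ffunE.
by rewrite (reindex_inj (@perm_inj _ u.1)) /= in v0; rewrite big_split /= u0 v0 addr0.
Qed.

Lemma inG_minv (u : M) : inG u -> inG (minv u).
Proof.
rewrite /inG /minv /= => /eqP u0.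
under eq_bigr => i _ do rewrite ffunE.
by rewrite (reindex_inj (@perm_inj _ (u.1^-1)%g)) /= in u0; rewrite sumrN u0 oppr0.
Qed.

Hypothesis n_gt1 : 1 < n.
Let row0 : 'I_n := Ordinal (ltnW n_gt1).
Let row1 : 'I_n := Ordinal n_gt1.

Definition tgen_exps (b : 'Z_e) : {ffun 'I_n -> 'Z_e} :=
  [ffun r : 'I_n => if r == 0%N :> nat then - b else if r == 1%N :> nat then b else 0]%R.

Lemma tgenE b : tgen n b = (tperm row0 row1, tgen_exps b).
Proof. by rewrite /tgen (@tp_ord 1 2 row0 row1). Qed.

Lemma tgen_exps_tperm b r : (tgen_exps b r + tgen_exps b (tperm row0 row1 r) = 0)%R.
Proof.
case: tpermP => [->|->|/eqP r0 /eqP r1]; rewrite !ffunE /= ?addNr ?addrN //.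
by rewrite !ifN ?addr0 // -val_eqE.
Qed.

Lemma tp_invol a b : (tp n a b * tp n a b = 1)%g.
Proof.
by rewrite /tp; case: insub => [x|]; rewrite ?mulg1 //; case: insub => [y|]; rewrite ?tperm2 ?mulg1.
Qed.

Lemma gen_mmulK (g x : M) : isgen g -> mmul g (mmul g x) = x.
Proof.
case: x => s a; case/isgenE=> [[b ->]|[j _ ->]].
  rewrite tgenE /mmul /=; congr pair; first by rewrite mulgA tperm2 mul1g.
  apply/ffunP => r; have := tgen_exps_tperm b r.
  by rewrite !ffunE tpermK addrA => ->; rewrite add0r.
rewrite /sgen /mmul /=; congr pair; first by rewrite mulgA tp_invol mul1g.
by apply/ffunP => r; rewrite !ffunE !add0r -permM tp_invol perm1.
Qed.

Lemma inG_gen (g : M) : isgen g -> inG g.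
Proof.
case/isgenE=> [[b ->]|[j _ ->]]; last by rewrite /inG big1 // => r _; rewrite ffunE.
rewrite tgenE /inG /= (bigD1 row0) //= (bigD1 row1) //= big1 ?addr0.
  by have := tgen_exps_tperm b row0; rewrite tpermL => ->.
by move=> r /andP [r1 r0]; rewrite ffunE !ifN.
Qed.

Definition tgen_shift (b : 'Z_e) (a : {ffun 'I_n -> 'Z_e}) : {ffun 'I_n -> 'Z_e} :=
  [ffun r => tgen_exps b (tperm row0 row1 r) + a r]%R.

Lemma mlength_tgen_mul b s a :
  mlength (mmul (tgen n b) (s, a)) + pair_weight s a row0 row1 =
  mlength (s, a) + pair_weight s (tgen_shift b a) row1 row0.
Proof.
have -> : mmul (tgen n b) (s, a) =
          ((tperm row0 row1 * s)%g, [ffun r => tgen_shift b a (tperm row0 row1 r)]).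
  by rewrite tgenE /mmul; congr pair; apply/ffunP => r; rewrite !ffunE tpermK.
have shift_rows01 : mlength (s, tgen_shift b a) + pair_weight s a row0 row1 =
                    mlength (s, a) + pair_weight s (tgen_shift b a) row0 row1.
  apply: mlength_change_rows01 => // r r_gt1.
  rewrite ffunE tpermD -?val_eqE /=; try lia.
  by rewrite ffunE !ifN ?add0r //; apply/eqP; lia.
have := mlength_tperm_adjacent s (tgen_shift b a) (erefl : row1 = row0.+1 :> nat); lia.
Qed.

Lemma mlength_sgen_mul j (p q : 'I_n) s a :
  p = j.-2 :> nat -> q = j.-1 :> nat -> 2 <= j ->
  mlength (mmul (sgen e n j) (s, a)) + pair_weight s a p q =
  mlength (s, a) + pair_weight s a q p.
Proof.
move=> pj qj j_ge2.
have -> : mmul (sgen e n j) (s, a) = ((tperm p q * s)%g, [ffun r => a (tperm p q r)]).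
  rewrite /sgen (@tp_ord j.-1 j p q) // /mmul; congr pair.
  by apply/ffunP => r; rewrite !ffunE add0r.
by apply: mlength_tperm_adjacent; lia.
Qed.

Lemma mlength_gen_mul_le (g x : M) : isgen g -> mlength (mmul g x) <= mlength x + 1.
Proof.
case: x => s a; case/isgenE=> [[b ->]|[j /andP [j_ge3 j_le] ->]].
  have := mlength_tgen_mul b s a.
  have := @pair_weight_swap_le s a (tgen_shift b a) row0 row1 isT; lia.
have p_lt : j.-2 < n by lia.
have q_lt : j.-1 < n by lia.
have := @mlength_sgen_mul j (Ordinal p_lt) (Ordinal q_lt) s a erefl erefl (ltnW j_ge3).
have pq : Ordinal p_lt != Ordinal q_lt by rewrite -val_eqE /=; lia.
have := pair_weight_swap_le s a a pq; lia.
Qed.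

Lemma mlength_mone : mlength (mone e n) = 0.
Proof.
rewrite /mlength big1 // => i _; rewrite big1 // => j _.
by rewrite /pair_weight /= ffunE eqxx !perm1; case: ltnP => //= ji; rewrite ltnNge ltnW.
Qed.

Lemma pair_weight_ge_exp0 s (a a' : {ffun 'I_n -> 'Z_e}) (p q : 'I_n) :
  p != q -> a' p = 0%R -> pair_weight s a p q <= pair_weight s a' q p ->
  a q = 0%R /\ s p < s q.
Proof.
move=> pq a'p; have : s p != s q :> nat by rewrite val_eqE (inj_eq perm_inj).
rewrite /pair_weight a'p eqxx; case: (eqVneq (a q) 0%R) => [->|_] /= spq le_w.
  by split=> //; lia.
by exfalso; lia.
Qed.

Section NoDescent.
Variables (s : {perm 'I_n}) (a : {ffun 'I_n -> 'Z_e}).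
Hypothesis no_descent : forall g : M, isgen g -> mlength (s, a) <= mlength (mmul g (s, a)).

Lemma no_descent_adjacent m (i j : 'I_n) :
  i = m :> nat -> j = m.+1 :> nat -> a j = 0%R /\ s i < s j.
Proof.
elim: m i j => [|m IH] i j im jm.
  have -> : i = row0 by apply: val_inj.
  have -> : j = row1 by apply: val_inj.
  (* for b = - a row0, the product t_b (s, a) has exponent 0 in row 1 *)
  have le_len := no_descent (isgen_tgen (- a row0)%R).
  have len_eq := mlength_tgen_mul (- a row0)%R s a.
  apply: (@pair_weight_ge_exp0 _ _ (tgen_shift (- a row0)%R a)); [by []| |lia].
  by rewrite !ffunE tpermL /= addNr.
have lt_mn : m < n by have := ltn_ord i; lia.
have [a_i _] := IH (Ordinal lt_mn) i erefl im.
have j_le : 3 <= m.+3 <= n by rewrite ltnS ltnS; have := ltn_ord j; lia.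
have le_len := no_descent (isgen_sgen j_le).
have len_eq := @mlength_sgen_mul m.+3 i j s a im jm erefl.
have ij : i != j by rewrite -val_eqE /= im jm; lia.
by apply: (pair_weight_ge_exp0 ij a_i); lia.
Qed.

Lemma no_descent_eq1 : inG (s, a) -> (s, a) = mone e n.
Proof.
move=> Gsa.
have s1 : s = 1%g.
  by apply: perm_incr_eq1 => i j ji; have [] := @no_descent_adjacent i i j erefl ji.
have a_gt0 (i : 'I_n) : i != 0 :> nat -> a i = 0%R.
  case: i => -[|m] lt_mn // _.
  by have [] := @no_descent_adjacent m (Ordinal (ltnW lt_mn)) (Ordinal lt_mn) erefl erefl.
have a_row0 : a row0 = 0%R.
  move: Gsa; rewrite /inG /= (bigD1 row0) //= big1 ?addr0 => [/eqP //|i i0].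
  exact: a_gt0.
rewrite s1 /mone; congr pair; apply/ffunP => i; rewrite ffunE.
have [i0|] := eqVneq (i : nat) 0; last exact: a_gt0.
by rewrite (_ : i = row0) //; apply: val_inj.
Qed.

End NoDescent.

Lemma exists_descent (x : M) :
  inG x -> x != mone e n -> exists2 g : M, isgen g & mlength (mmul g x) < mlength x.
Proof.
case: x => s a Gx x1.
have [/existsP [g /andP [gen_g lt_g]]|/existsPn no_lt] :=
  boolP [exists g : M, isgen g && (mlength (mmul g (s, a)) < mlength (s, a))].
  by exists g.
case/eqP: x1; apply: no_descent_eq1 => // g gen_g.
by have := no_lt g; rewrite gen_g /= -leqNgt.
Qed.

Lemma mlength_wprod_le (w : seq M) : all (@isgen e n) w -> mlength (wprod w) <= size w.
Proof.
elim: w => [|g w IH] /=; first by rewrite mlength_mone.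
by case/andP=> gen_g gen_w; have := mlength_gen_mul_le (wprod w) gen_g; have := IH gen_w; lia.
Qed.

Lemma exists_word_mlength (x : M) :
  inG x -> exists w : seq M, [/\ all (@isgen e n) w, wprod w = x & size w <= mlength x].
Proof.
move: {2}(mlength x) (leqnn (mlength x)) => m; elim: m x => [|m IH] x len_x Gx;
  have [->|x1] := eqVneq x (mone e n); try by exists [::].
  by have [g _] := exists_descent Gx x1; lia.
have [g gen_g lt_len] := exists_descent Gx x1.
have [w [gen_w wx size_w]] := IH (mmul g x) ltac:(lia) (inG_mmul (inG_gen gen_g) Gx).
by exists (g :: w); split=> /=; [rewrite gen_g | rewrite wx gen_mmulK | lia].
Qed.

Lemma wlen_mlength (x : M) : inG x -> wlen x (mlength x).
Proof.
move=> Gx; split=> [|w gen_w <-]; last exact: mlength_wprod_le.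
have [w [gen_w wx size_w]] := exists_word_mlength Gx.
by exists w; do 2!split=> //; have := mlength_wprod_le gen_w; rewrite wx; lia.
Qed.

Lemma wlenE (x : M) m : inG x -> wlen x m <-> m = mlength x.
Proof.
move=> Gx; split=> [[[w [gen_w [wx <-]]] min_m]|->]; last exact: wlen_mlength.
have [[w' [gen_w' [wx' size_w']]] _] := wlen_mlength Gx.
by have := min_m _ gen_w' wx'; have := mlength_wprod_le gen_w; rewrite wx; lia.
Qed.

Definition lambda_exps k : {ffun 'I_n -> 'Z_e} := [ffun r => (lambda e n).2 r *+ k]%R.

Lemma mpow_lambda k : mpow (lambda e n) k = (1%g, lambda_exps k).
Proof.
elim: k => [|k IH]; first by congr pair; apply/ffunP => r; rewrite !ffunE mulr0n.
rewrite /mpow /= -/(mpow _ _) IH /mmul /= mulg1; congr pair.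
by apply/ffunP => r; rewrite !ffunE perm1 mulrS.
Qed.

Lemma inG_mpow_lambda k : inG (mpow (lambda e n) k).
Proof.
rewrite mpow_lambda /inG /=; under eq_bigr => i _ do rewrite ffunE.
rewrite sumrMnl (bigD1 row0) //= ffunE /= (eq_bigr (fun=> 1%R)) => [|i i0]; last first.
  by rewrite ffunE ifN.
by rewrite sumr_const cardC1 card_ord subn1 addNr mul0rn.
Qed.

Lemma lambda_exps_row k (i : 'I_n) : i != 0 :> nat -> lambda_exps k i = (k%:R)%R.
Proof. by move=> i0; rewrite !ffunE /= (negPf i0). Qed.

Lemma mlength_mpow_lambda k : (k%:R != 0 :> 'Z_e)%R ->
  mlength (mpow (lambda e n) k) = \sum_(i : 'I_n) \sum_(j : 'I_n) (j < i) * 2.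
Proof.
move=> k_neq0; rewrite mpow_lambda; apply: eq_bigr => i _; apply: eq_bigr => j _ /=.
case: ltnP => //= ji; rewrite /pair_weight lambda_exps_row; last by rewrite -lt0n; lia.
by rewrite (negPf k_neq0) !perm1 ji.
Qed.

Lemma mlength_reindex (s : {perm 'I_n}) (y : M) :
  mlength y = \sum_(i : 'I_n) \sum_(j : 'I_n) (s j < s i) * pair_weight y.1 y.2 (s j) (s i).
Proof.
rewrite /mlength (reindex_inj (@perm_inj _ s)); apply: eq_bigr => i _.
exact: (reindex_inj (@perm_inj _ s)).
Qed.

(* [bad_pair k w j i]: the entry (j, w.1 j) lies north-west of the entry (i, w.1 i),
   so the latter is not a bullet, and its exponent is neither 0 nor k. *)
Definition bad_pair k (w : M) (j i : 'I_n) : bool :=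
  [&& j < i, w.1 j < w.1 i, w.2 i != 0%R & w.2 i != (k%:R)%R].

Definition nbad_pairs k (w : M) : nat := \sum_(i : 'I_n) \sum_(j : 'I_n) bad_pair k w j i.

Section Complement.
Variables (k : nat) (w y : M).
(* Both w^-1 lambda^k and lambda^k w^-1 have this shape. *)
Hypotheses (k_neq0 : (k%:R != 0 :> 'Z_e)%R) (yw : forall i, y.1 (w.1 i) = i).
Hypothesis yw2 :
  forall i : 'I_n, i != 0 :> nat -> w.1 i != 0 :> nat -> y.2 (w.1 i) = (k%:R - w.2 i)%R.

Lemma pair_weight_complement (j i : 'I_n) : j < i ->
  pair_weight w.1 w.2 j i + (w.1 j < w.1 i) * pair_weight y.1 y.2 (w.1 j) (w.1 i)
    + (w.1 i < w.1 j) * pair_weight y.1 y.2 (w.1 i) (w.1 j) = 2 + 2 * bad_pair k w j i.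
Proof.
move=> ji; have ij : (i < j) = false by rewrite ltnNge ltnW.
have : w.1 j != w.1 i :> nat by rewrite val_eqE (inj_eq perm_inj) -val_eqE /=; lia.
rewrite /bad_pair /pair_weight !yw ji ij /=.
case: ltngtP => //= wji _; first by do 3!case: ifP => _.
rewrite yw2 ?subr_eq0; [|lia|lia].
have [->|_] := eqVneq (w.2 i) 0%R; first by rewrite (negPf k_neq0) mul0n.
by rewrite mul0n [_ == w.2 i]eq_sym; case: (w.2 i == k%:R)%R.
Qed.

Lemma mlength_complement :
  mlength w + mlength y = mlength (mpow (lambda e n) k) + 2 * nbad_pairs k w.
Proof.
rewrite (mlength_reindex w.1 y) mlength_mpow_lambda // /nbad_pairs /mlength.
rewrite big_distrr -!big_split /=.
under eq_bigr => i _ do rewrite -big_split.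
under [RHS]eq_bigr => i _ do rewrite big_distrr -big_split.
apply: double_sum_eq_sym => i j /=.
case: (ltngtP j i) => [ji|ij|/val_inj ->]; last by rewrite /bad_pair !ltnn.
  rewrite [bad_pair k w i j]/bad_pair (leq_gtF (ltnW ji)) /= !mul1n !mul0n add0n.
  by rewrite pair_weight_complement // muln0 !addn0.
rewrite [bad_pair k w j i]/bad_pair (leq_gtF (ltnW ij)) /= !mul1n !mul0n !add0n.
by rewrite addnC pair_weight_complement.
Qed.

End Complement.

Lemma nbad_pairs_eq0 k (w : M) : nbad_pairs k w = 0 <-> forall i j, ~~ bad_pair k w j i.
Proof.
split=> [|no_bad]; last first.
  by rewrite /nbad_pairs big1 // => i _; rewrite big1 // => j _; rewrite (negPf (no_bad i j)).
move=> /eqP; rewrite sum_nat_eq0 => /forallP no_bad i j; move/eqP: (no_bad i).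
by rewrite (bigD1 j) //=; case: (bad_pair k w j i).
Qed.

Lemma bulletE (w : M) (i : 'I_n) :
  bullet w i (w.1 i) = [forall j : 'I_n, ~~ ((j < i) && (w.1 j < w.1 i))].
Proof.
rewrite /bullet /entry eqxx /=; apply/forallP/forallP => no_nw j.
  apply/negP => /andP [ji wji]; have /forallP/(_ (w.1 j)) := no_nw j.
  by rewrite ji wji eqxx.
apply/forallP => c; apply/negP => /and3P [ji cwi]; case: ifP => // /eqP wjc _.
by have := no_nw j; rewrite ji wjc cwi.
Qed.

Lemma inD_no_bad_pairs k (w : M) : inG w -> inD k w <-> forall i j, ~~ bad_pair k w j i.
Proof.
move=> Gw; rewrite /inD Gw; split=> [/forallP inD_w i j | no_bad].
  apply/negP => /and4P [ji wji a0 ak].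
  have /forallP/(_ (w.1 i)) := inD_w i.
  rewrite bulletE /entry eqxx !(inj_eq Some_inj) (negPf a0) (negPf ak) implybF negbK.
  by move=> /forallP/(_ j); rewrite ji wji.
apply/forallP => i; apply/forallP => c; rewrite /entry; case: ifP => // /eqP <-.
rewrite bulletE !(inj_eq Some_inj) /=; apply/implyP => /forallPn [j].
rewrite negbK => /andP [ji wji]; move: (no_bad i j).
by rewrite /bad_pair ji wji /= negb_and !negbK.
Qed.

Lemma preceqE (u v : M) : inG u -> inG v ->
  preceq u v <-> mlength u + mlength (mmul (minv u) v) = mlength v.
Proof.
move=> Gu Gv; have Guv := inG_mmul (inG_minv Gu) Gv.
split=> [[a [b [c [/(wlenE _ Gu) -> [/(wlenE _ Guv) -> [/(wlenE _ Gv) -> //]]]]]]|uv].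
exists (mlength u), (mlength (mmul (minv u) v)), (mlength v).
by split; [|split; [|split]] => //; apply: wlen_mlength.
Qed.

Lemma preceq_rE (u v : M) : inG u -> inG v ->
  preceq_r u v <-> mlength (mmul v (minv u)) + mlength u = mlength v.
Proof.
move=> Gu Gv; have Gvu := inG_mmul Gv (inG_minv Gu).
split=> [[a [b [c [/(wlenE _ Gvu) -> [/(wlenE _ Gu) -> [/(wlenE _ Gv) -> //]]]]]]|vu].
exists (mlength (mmul v (minv u))), (mlength u), (mlength v).
by split; [|split; [|split]] => //; apply: wlen_mlength.
Qed.

Lemma preceq_mpow_lambda k (w : M) : (k%:R != 0 :> 'Z_e)%R -> inG w ->
  preceq w (mpow (lambda e n) k) <-> nbad_pairs k w = 0.
Proof.
move=> k_neq0 Gw; apply: (iff_trans (preceqE Gw (inG_mpow_lambda k))).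
rewrite (@mlength_complement k w (mmul (minv w) (mpow (lambda e n) k)) k_neq0).
- by split; lia.
- by move=> i; rewrite mpow_lambda /= mulg1 permK.
by move=> i i0 _; rewrite mpow_lambda !ffunE permK ifN // addrC.
Qed.

Lemma preceq_r_mpow_lambda k (w : M) : (k%:R != 0 :> 'Z_e)%R -> inG w ->
  preceq_r w (mpow (lambda e n) k) <-> nbad_pairs k w = 0.
Proof.
move=> k_neq0 Gw; apply: (iff_trans (preceq_rE Gw (inG_mpow_lambda k))).
rewrite addnC (@mlength_complement k w (mmul (mpow (lambda e n) k) (minv w)) k_neq0).
- by split; lia.
- by move=> i; rewrite mpow_lambda /= mul1g permK.
by move=> i _ wi0; rewrite mpow_lambda !ffunE perm1 ifN // permK.
Qed.

End Length.

Theorem mainTheorem5 (e n : nat) (he : (2 <= e)%N) (hn : (2 <= n)%N)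
  (k : nat) (hk1 : (1 <= k)%N) (hk2 : (k <= e - 1)%N) :
  (forall w : mon e n, inG w -> (preceq w (mpow (lambda e n) k) <-> inD k w)) /\
  (forall w : mon e n, inG w ->
     (preceq w (mpow (lambda e n) k) <-> preceq_r w (mpow (lambda e n) k))).
Proof.
have k_neq0 : (k%:R != 0 :> 'Z_e)%R by apply: Zp_nat_neq0; lia.
split=> w Gw; apply: (iff_trans (preceq_mpow_lambda hn k_neq0 Gw)).
  exact: iff_sym (iff_trans (inD_no_bad_pairs k Gw) (iff_sym (nbad_pairs_eq0 k w))).
exact: iff_sym (preceq_r_mpow_lambda hn k_neq0 Gw).
Qed.
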